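(* Let $R$ be a ring satisfying the irreducible intersection property. Then for every ideal $I\subset R$, the quotient $R/I$ satisfies the irreducible intersection property, and for every multiplicative subset $S\subset R$, the localization $S^{-1}R$ satisfies the irreducible intersection property. Moreover, if $R_1,\dots,R_n$ are rings each satisfying the irreducible intersection property, then $R_1\times\cdots\times R_n$ satisfies the irreducible intersection property.
   Context: All rings are commutative with $1$. A ring $R$ satisfies the irreducible intersection property if for any prime ideals $p_1,p_2\subset R$, either $p_1+p_2=R$ or $p_1+p_2$ is a prime ideal. *)

(* Commutative rings with 1 are [comPzRingType] (the zero ring
   is allowed, so that R/R and S^{-1}R with 0 in S are covered). *)
From HB Require Import structures.
From mathcomp Require Import all_boot all_order all_algebra.
Set Implicit Arguments. Unset Strict Implicit. Unset Printing Implicit Defensive.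
Import GRing.Theory.
Local Open Scope ring_scope.

Definition is_ideal (R : comPzRingType) (I : R -> Prop) : Prop :=
  [/\ I 0, (forall x y, I x -> I y -> I (x + y)) & (forall r x, I x -> I (r * x))].

Definition is_prime_ideal (R : comPzRingType) (P : R -> Prop) : Prop :=
  [/\ is_ideal P, ~ P 1 & (forall x y, P (x * y) -> P x \/ P y)].

Definition ideal_sum (R : comPzRingType) (I J : R -> Prop) : R -> Prop :=
  fun z => exists x y, [/\ I x, J y & z = x + y].

Definition IIP (R : comPzRingType) : Prop :=
  forall p1 p2 : R -> Prop, is_prime_ideal p1 -> is_prime_ideal p2 ->
    (forall z, ideal_sum p1 p2 z) \/ is_prime_ideal (ideal_sum p1 p2).

Definition is_multiplicative (R : comPzRingType) (S : R -> Prop) : Prop :=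
  S 1 /\ (forall x y, S x -> S y -> S (x * y)).

(* Q together with f is (a model of) the quotient ring R/I:
   f is a surjective ring morphism with kernel exactly I. *)
Definition is_quotient_by (R Q : comPzRingType) (I : R -> Prop)
    (f : {rmorphism R -> Q}) : Prop :=
  (forall q : Q, exists r, f r = q) /\ (forall r, f r = 0 <-> I r).

(* L together with g is (a model of) the localization S^{-1}R:
   images of S are units, every element is g r / g s with s in S,
   and the kernel of g is {r | s r = 0 for some s in S}. *)
Definition is_localization_at (R L : comPzRingType) (S : R -> Prop)
    (g : {rmorphism R -> L}) : Prop :=
  [/\ (forall s, S s -> exists u, g s * u = 1),
      (forall y : L, exists r s, S s /\ y * g s = g r) &
      (forall r, g r = 0 <-> exists s, S s /\ s * r = 0)].

(* P together with the projections pi is (a model of) R_1 x ... x R_n: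
   the map p |-> (pi i p)_i is a bijection onto all families. *)
Definition is_product (n : nat) (Rs : 'I_n -> comPzRingType) (P : comPzRingType)
    (pi : forall i, {rmorphism P -> Rs i}) : Prop :=
  forall x : (forall i, Rs i),
    exists p, (forall i, pi i p = x i) /\
      (forall p', (forall i, pi i p' = x i) -> p' = p).

(* All three statements are transported along ring morphisms by pulling prime
   ideals back and pushing the sum of two primes forward.
   - Quotients and localizations are both instances of one transfer lemma for
     a morphism g : R -> L in which every element of L is a fraction
     g r / g s with g s invertible (s in a set S; S = {1} for quotients), and
     in which membership of g r in a sum q1 + q2 lifts, after multiplying r
     by some s in S, to the sum of the preimages of q1 and q2.  The proof
     pulls q1, q2 back to R, applies IIP there, and pushes the result back.
   - For a finite product P of rings R_i, every prime of P misses one of the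
     unit vectors e_i, and is then the preimage of a prime of R_i under the
     i-th projection.  Two primes attached to different indices sum to P;
     two primes attached to the same index i have as sum the preimage of the
     sum of their images in R_i, which IIP for R_i controls. *)
From mathcomp Require Import all_boot all_order all_algebra.
From mathcomp Require Import ring.
From Stdlib Require Import Classical FunctionalExtensionality PropExtensionality.
Set Implicit Arguments. Unset Strict Implicit. Unset Printing Implicit Defensive.
Import GRing.Theory.
Local Open Scope ring_scope.

Definition preimage (R L : comPzRingType) (g : R -> L) (q : L -> Prop) : R -> Prop :=
  fun r => q (g r).

Lemma ideal_sum_ideal (R : comPzRingType) (I J : R -> Prop) :
  is_ideal I -> is_ideal J -> is_ideal (ideal_sum I J).
Proof.
case=> [I0 ID IM] [J0 JD JM]; split.
- by exists 0, 0; rewrite addr0.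
- move=> _ _ [x [y [Ix Jy ->]]] [x' [y' [Ix' Jy' ->]]].
  exists (x + x'), (y + y'); split; [exact: ID | exact: JD | by rewrite addrACA].
- move=> r _ [x [y [Ix Jy ->]]]; exists (r * x), (r * y).
  by split; [exact: IM | exact: JM | rewrite mulrDr].
Qed.

Lemma prime_sum_ideal (R : comPzRingType) (q1 q2 : R -> Prop) :
  is_prime_ideal q1 -> is_prime_ideal q2 -> is_ideal (ideal_sum q1 q2).
Proof. by case=> ? _ _ [? _ _]; apply: ideal_sum_ideal. Qed.

Lemma ideal_full (R : comPzRingType) (J : R -> Prop) :
  is_ideal J -> J 1 -> forall z, J z.
Proof. by case=> _ _ JM J1 z; rewrite -(mulr1 z); apply: JM. Qed.

Lemma prime_zero_product (R : comPzRingType) (q : R -> Prop) (a b : R) :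
  is_prime_ideal q -> a * b = 0 -> ~ q b -> q a.
Proof.
case=> [[q0 _ _] _ qP] ab0 nqb.
by have [|//|//] := qP a b; rewrite ab0.
Qed.

Lemma prime_preimage (R L : comPzRingType) (g : {rmorphism R -> L}) (q : L -> Prop) :
  is_prime_ideal q -> is_prime_ideal (preimage g q).
Proof.
case=> [[q0 qD qM] q1 qP]; rewrite /preimage; split.
- split; first by rewrite rmorph0.
  + by move=> x y qx qy; rewrite rmorphD; apply: qD.
  + by move=> r x qx; rewrite rmorphM; apply: qM.
- by rewrite rmorph1.
- by move=> x y; rewrite rmorphM; apply: qP.
Qed.

Lemma prime_of_preimage (R L : comPzRingType) (f : {rmorphism R -> L}) (p : L -> Prop) :
  (forall a, exists x, f x = a) -> is_prime_ideal (preimage f p) -> is_prime_ideal p.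
Proof.
move=> f_surj [[p0 pD pM] p1 pP]; move: p0 p1; rewrite /preimage rmorph0 rmorph1.
move=> p0 p1; split => //; first split => //.
- move=> a b; have [x <-] := f_surj a; have [y <-] := f_surj b.
  by rewrite -rmorphD; apply: pD.
- move=> r a; have [x <-] := f_surj r; have [y <-] := f_surj a.
  by rewrite -rmorphM; apply: pM.
- move=> a b; have [x <-] := f_surj a; have [y <-] := f_surj b.
  by rewrite -rmorphM; apply: pP.
Qed.

Lemma ideal_sum_preimage_sub (R L : comPzRingType) (g : {rmorphism R -> L})
    (q1 q2 : L -> Prop) (r : R) :
  ideal_sum (preimage g q1) (preimage g q2) r -> ideal_sum q1 q2 (g r).
Proof. by case=> x [y [q1x q2y ->]]; exists (g x), (g y); rewrite rmorphD. Qed.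

Lemma ideal_sum_preimage (R L : comPzRingType) (f : {rmorphism R -> L})
    (q1 q2 : L -> Prop) :
  (forall a, exists x, f x = a) ->
  ideal_sum (preimage f q1) (preimage f q2) = preimage f (ideal_sum q1 q2).
Proof.
move=> f_surj; apply: functional_extensionality => z.
apply: propositional_extensionality; split; first exact: ideal_sum_preimage_sub.
case=> a [b [q1a q2b e]]; have [x ex] := f_surj a.
exists x, (z - x); split; rewrite /preimage.
- by rewrite ex.
- by rewrite rmorphB e -ex addrC addKr.
- by rewrite addrC subrK.
Qed.

Section FractionTransfer.

Variables (R L : comPzRingType) (g : {rmorphism R -> L}) (S : R -> Prop).

Hypothesis S_units : forall s, S s -> exists u, g s * u = 1.
Hypothesis fractions : forall y : L, exists r s, S s /\ y * g s = g r.
Hypothesis sum_lift : forall (q1 q2 : L -> Prop) (r : R),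
  is_prime_ideal q1 -> is_prime_ideal q2 -> ideal_sum q1 q2 (g r) ->
  exists s, S s /\ ideal_sum (preimage g q1) (preimage g q2) (s * r).

Lemma ideal_fraction (J : L -> Prop) (z : L) (r s : R) :
  is_ideal J -> S s -> z * g s = g r -> J z <-> J (g r).
Proof.
case=> _ _ JM Ss e; split; first by rewrite -e mulrC; apply: JM.
have [u gsu] := S_units Ss.
have -> : z = u * g r by rewrite -e mulrCA (mulrC u) gsu mulr1.
exact: JM.
Qed.

Lemma proper_ideal_avoids_S (J : L -> Prop) (s : R) :
  is_ideal J -> ~ J 1 -> S s -> ~ J (g s).
Proof.
move=> J_ideal nJ1 Ss Jgs; apply: nJ1.
exact/(ideal_fraction J_ideal Ss (mul1r _)).
Qed.

Lemma IIP_fraction_transfer : IIP R -> IIP L.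
Proof.
move=> IIP_R q1 q2 q1_prime q2_prime.
have J_ideal := prime_sum_ideal q1_prime q2_prime.
have [J1|nJ1] := classic (ideal_sum q1 q2 1); first by left; apply: ideal_full.
right; split=> // z1 z2 Jz.
have [r1 [s1 [S1 e1]]] := fractions z1.
have [r2 [s2 [S2 e2]]] := fractions z2.
have Jr : ideal_sum q1 q2 (g (r1 * r2)).
  have -> : g (r1 * r2) = g (s1 * s2) * (z1 * z2).
    by rewrite !rmorphM -e1 -e2; ring.
  by case: J_ideal => _ _; apply.
have [s [Ss sum_sr]] := sum_lift q1_prime q2_prime Jr.
have [full|[_ _ sum_prime]] :=
  IIP_R _ _ (prime_preimage g q1_prime) (prime_preimage g q2_prime).
  by case: nJ1; rewrite -(rmorph1 g); apply: ideal_sum_preimage_sub.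
have [/ideal_sum_preimage_sub Js|/sum_prime [Jr1|Jr2]] := sum_prime _ _ sum_sr.
- by case: (proper_ideal_avoids_S J_ideal nJ1 Ss).
- by left; apply/(ideal_fraction J_ideal S1 e1); apply: ideal_sum_preimage_sub.
- by right; apply/(ideal_fraction J_ideal S2 e2); apply: ideal_sum_preimage_sub.
Qed.

End FractionTransfer.

(* A quotient is the fraction transfer with S = {1}. *)
Lemma IIP_quotient (R Q : comPzRingType) (I : R -> Prop) (f : {rmorphism R -> Q}) :
  is_quotient_by I f -> IIP R -> IIP Q.
Proof.
case=> f_surj _; apply: (IIP_fraction_transfer (S := fun s => s = 1)).
- by move=> s ->; exists 1; rewrite rmorph1 mulr1.
- by move=> y; have [r <-] := f_surj y; exists r, 1; rewrite rmorph1 mulr1.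
- move=> q1 q2 r _ _ Jr; exists 1; split => //.
  by rewrite mul1r ideal_sum_preimage.
Qed.

(* For a localization, a relation g r = g x / g s + g y / g t holds in R only
   after multiplying by an element of S, which is what [sum_lift] allows. *)
Lemma IIP_localization (R L : comPzRingType) (S : R -> Prop) (g : {rmorphism R -> L}) :
  is_multiplicative S -> is_localization_at S g -> IIP R -> IIP L.
Proof.
move=> [_ SM] [S_units fractions ker_g].
apply: (IIP_fraction_transfer S_units fractions).
move=> q1 q2 r [[_ _ q1M] _ _] [[_ _ q2M] _ _] [a [b [q1a q2b e]]].
have [x [s [Ss es]]] := fractions a.
have [y [t [St et]]] := fractions b.
have q1x : preimage g q1 x by rewrite /preimage -es mulrC; apply: q1M.
have q2y : preimage g q2 y by rewrite /preimage -et mulrC; apply: q2M.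
have : g (r * s * t - (x * t + y * s)) = 0.
  by rewrite rmorphB rmorphD !rmorphM -es -et e; ring.
case/ker_g => s' [Ss' /eqP]; rewrite mulrBr subr_eq0 => /eqP e'.
exists (s' * s * t); split; first exact: SM (SM _ _ Ss' Ss) St.
exists (s' * t * x), (s' * s * y); split.
- by rewrite /preimage rmorphM; apply: q1M.
- by rewrite /preimage rmorphM; apply: q2M.
- have -> : s' * s * t * r = s' * (r * s * t) by ring.
  by rewrite e'; ring.
Qed.

Section Product.

Variables (n : nat) (Rs : 'I_n -> comPzRingType) (P : comPzRingType).
Variable pi : forall i, {rmorphism P -> Rs i}.
Hypothesis P_product : is_product pi.

Lemma product_ext (a b : P) : (forall i, pi i a = pi i b) -> a = b.
Proof.
move=> eab; have [p [_ p_uniq]] := P_product (fun i => pi i a).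
by rewrite (p_uniq a (fun=> erefl)) (p_uniq b (fun i => esym (eab i))).
Qed.

Lemma projection_surj (i : 'I_n) (a : Rs i) : exists p, pi i p = a.
Proof.
pose x k : Rs k := if i =P k is ReflectT e then eq_rect i (fun k => Rs k : Type) a k e
                   else 0.
have [p [px _]] := P_product x; exists p; rewrite px /x.
by case: (i =P i) => [e|//]; rewrite (eq_irrelevance e erefl).
Qed.

Definition indicator (A : pred 'I_n) (e : P) : Prop :=
  forall k, pi k e = (k \in A)%:R.

Lemma indicator_exists (A : pred 'I_n) : exists e, indicator A e.
Proof. by have [e [pe _]] := P_product (fun k => (k \in A)%:R); exists e. Qed.

(* A prime ideal misses some unit vector: otherwise, since e_A + e_a - e_A e_a
   is the indicator of a :: A, it contains the indicator of every index list,
   in particular 1. *)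
Lemma prime_misses_unit_vector (q : P -> Prop) :
  is_prime_ideal q -> exists i e, indicator (pred1 i) e /\ ~ q e.
Proof.
move=> [[q0 qD qM] q1 _]; apply: NNPP => no_miss.
have q_indicators (A : seq 'I_n) : exists e, q e /\ indicator (mem A) e.
  elim: A => [|a A [eA [qeA eA_ind]]].
    by exists 0; split => // k; rewrite rmorph0.
  have [ea ea_ind] := indicator_exists (pred1 a).
  have qea : q ea by apply: NNPP => nqea; apply: no_miss; exists a, ea.
  exists (ea + eA - ea * eA); split.
    by apply: qD (qD _ _ qea qeA) _; rewrite -mulNr; apply: qM.
  move=> k; rewrite rmorphB rmorphD rmorphM ea_ind eA_ind !inE.
  by case: (k == a); case: (k \in A) => /=; ring.
have [e [qe e_ind]] := q_indicators (enum 'I_n).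
by apply: q1; suff <- : e = 1 by []; apply: product_ext => k; rewrite e_ind mem_enum rmorph1.
Qed.

(* A prime ideal missing the unit vector e_i is the preimage under pi i of its
   image: if pi i x = pi i y with y in q, then e_i x = e_i y lies in q. *)
Lemma prime_component_preimage (q : P -> Prop) (i : 'I_n) (e : P) :
  is_prime_ideal q -> indicator (pred1 i) e -> ~ q e ->
  q = preimage (pi i) (fun a => exists y, q y /\ pi i y = a).
Proof.
move=> q_prime e_ind nqe; apply: functional_extensionality => x.
apply: propositional_extensionality; split; first by move=> qx; exists x.
case=> y [qy yx]; have [[_ _ qM] _ qP] := q_prime.
have exy : e * x = e * y.
  apply: product_ext => k; rewrite !rmorphM e_ind inE.
  by case: eqP => [->|_]; rewrite ?yx ?mul0r.
by have [|//|//] := qP e x; rewrite exy; apply: qM.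
Qed.

(* Two primes missing unit vectors of different indices sum to P:
   1 = (1 - e_i) + e_i with 1 - e_i in q1 and e_i in q2. *)
Lemma primes_distinct_components_sum (q1 q2 : P -> Prop) (i j : 'I_n) (e1 e2 : P) :
  is_prime_ideal q1 -> is_prime_ideal q2 -> i != j ->
  indicator (pred1 i) e1 -> ~ q1 e1 -> indicator (pred1 j) e2 -> ~ q2 e2 ->
  forall z, ideal_sum q1 q2 z.
Proof.
move=> q1_prime q2_prime nij e1_ind nq1e1 e2_ind nq2e2.
apply: ideal_full; first exact: prime_sum_ideal.
exists (1 - e1), e1; split; last by rewrite subrK.
- apply: prime_zero_product q1_prime _ nq1e1; apply: product_ext => k.
  rewrite rmorphM rmorphB rmorph1 rmorph0 e1_ind inE.
  by case: (k == i) => /=; ring.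
- apply: prime_zero_product q2_prime _ nq2e2; apply: product_ext => k.
  rewrite rmorphM rmorph0 e1_ind e2_ind !inE.
  by case: eqP => [->|_]; rewrite ?(negbTE nij) ?mulr0 ?mul0r.
Qed.

Lemma IIP_product : (forall i, IIP (Rs i)) -> IIP P.
Proof.
move=> IIP_Rs q1 q2 q1_prime q2_prime.
have [i [e1 [e1_ind nq1e1]]] := prime_misses_unit_vector q1_prime.
have [j [e2 [e2_ind nq2e2]]] := prime_misses_unit_vector q2_prime.
have [eq_ij|nij] := eqVneq i j; last first.
  by left; apply: primes_distinct_components_sum nij e1_ind nq1e1 e2_ind nq2e2.
subst j.
have pi_surj := @projection_surj i.
move: (q1_prime) (q2_prime).
rewrite (prime_component_preimage q1_prime e1_ind nq1e1).
rewrite (prime_component_preimage q2_prime e2_ind nq2e2).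
move=> /(prime_of_preimage pi_surj) p1_prime /(prime_of_preimage pi_surj) p2_prime.
rewrite ideal_sum_preimage //.
have [full|sum_prime] := IIP_Rs i _ _ p1_prime p2_prime.
- by left => z; apply: full.
- by right; apply: prime_preimage.
Qed.

End Product.

Theorem mainTheorem9 :
  (forall (R : comPzRingType), IIP R ->
     (forall (I : R -> Prop) (Q : comPzRingType) (f : {rmorphism R -> Q}),
        is_ideal I -> is_quotient_by I f -> IIP Q) /\
     (forall (S : R -> Prop) (L : comPzRingType) (g : {rmorphism R -> L}),
        is_multiplicative S -> is_localization_at S g -> IIP L)) /\
  (forall (n : nat) (Rs : 'I_n -> comPzRingType) (P : comPzRingType)
          (pi : forall i, {rmorphism P -> Rs i}),
     (forall i, IIP (Rs i)) -> is_product pi -> IIP P).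
Proof.
split; last by move=> n Rs P pi IIP_Rs P_product; apply: IIP_product.
move=> R IIP_R; split.
- by move=> I Q f _ Q_quot; apply: IIP_quotient Q_quot IIP_R.
- by move=> S L g S_mult L_loc; apply: IIP_localization S_mult L_loc IIP_R.
Qed.
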